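(* Fix $t>0$. The transformation $\mathcal{T}$ on $C([0,t];\mathbb{R})$ has the following properties. (i) For every $\phi\in C([0,t];\mathbb{R})$, $\mathcal{T}(\phi)(t)=-\phi_t$. (ii) For every $\phi\in C([0,t];\mathbb{R})$, \[\frac{1}{A_s(\mathcal{T}(\phi))}=\frac{1}{A_s(\phi)}+\frac{e^{2\phi_t}-1}{A_t(\phi)},\quad 0<s\le t;\] in particular $A_t(\mathcal{T}(\phi))=e^{-2\phi_t}A_t(\phi)$. (iii) $Z_s(\mathcal{T}(\phi))=Z_s(\phi)$ for all $0\le s\le t$ and all $\phi$, i.e. $Z\circ\mathcal{T}=Z$. (iv) For every $z\in\mathbb{R}$, $\mathcal{T}\circ\mathbb{T}_z\circ\mathcal{T}\circ\mathbb{T}_z=\mathrm{Id}$; in particular $\mathcal{T}\circ\mathcal{T}=\mathrm{Id}$. Moreover $(\mathcal{T}\circ\mathbb{T}_z)(\phi)=\mathbb{T}_{2\phi_t-z}(\phi)$ for all $\phi\in C([0,t];\mathbb{R})$ and $z\in\mathbb{R}$. (v) For every $\phi\in C([0,t];\mathbb{R})$ with $\phi_0=0$, $(R\circ\mathcal{T})(\phi)=(\mathcal{T}\circ R)(\phi)$.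
   Context: For $\phi\in C([0,t];\mathbb{R})$ let $A_s(\phi)=\int_0^s e^{2\phi_u}\,du$ and $Z_s(\phi)=e^{-\phi_s}A_s(\phi)$. For $z\in\mathbb{R}$, $\mathbb{T}_z(\phi)(s)=\phi_s-\log\{1+\frac{A_s(\phi)}{A_t(\phi)}(e^z-1)\}$, $0\le s\le t$; $\mathcal{T}(\phi)(s)=\mathbb{T}_{2\phi_t}(\phi)(s)$; $R(\phi)(s)=\phi_{t-s}-\phi_t$, $0\le s\le t$ (time reversal); $\mathrm{Id}$ is the identity map on $C([0,t];\mathbb{R})$. *)

From Stdlib Require Import Reals.
From Coquelicot Require Import Coquelicot.
Open Scope R_scope.

(* An element of C([0,t];R) is represented by a function R -> R that is
   continuous on [0,t] (as a function on the subspace [0,t]); values outside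
   [0,t] are irrelevant. Equalities of paths are stated pointwise on [0,t]. *)
Definition cont_on_0t (t : R) (phi : R -> R) : Prop :=
  forall u, 0 <= u <= t ->
    filterlim phi (within (fun x => 0 <= x <= t) (locally u)) (locally (phi u)).

Definition A (phi : R -> R) (s : R) : R := RInt (fun u => exp (2 * phi u)) 0 s.

Definition Zf (phi : R -> R) (s : R) : R := exp (- phi s) * A phi s.

Definition bbT (t z : R) (phi : R -> R) (s : R) : R :=
  phi s - ln (1 + A phi s / A phi t * (exp z - 1)).

Definition calT (t : R) (phi : R -> R) : R -> R := bbT t (2 * phi t) phi.

Definition Rev (t : R) (phi : R -> R) (s : R) : R := phi (t - s) - phi t.

(* With D_s = 1 + (A_s(phi)/A_t(phi)) (e^z - 1),
   which is positive on [0,t] because 0 <= A_s <= A_t, one has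
   e^{2 T_z(phi)_s} = A'_s / D_s^2 = d/ds (A_s / D_s), hence A_s(T_z phi) = A_s(phi) / D_s.
   Consequently T_z(phi)_t = phi_t - z and T_w o T_z = T_{z+w}, T_0 = Id on [0,t], and
   (i)-(iv) are algebra.  (v) follows the same way from the substitution u -> t - u,
   A_s(R phi) = e^{-2 phi_t} (A_t(phi) - A_{t-s}(phi)). *)

From Stdlib Require Import Reals Lra.
From Coquelicot Require Import Coquelicot.
Open Scope R_scope.

Definition clamp (t u : R) : R := Rmax 0 (Rmin u t).

Lemma clamp_between t u : 0 <= t -> 0 <= clamp t u <= t.
Proof. intros Ht. unfold clamp, Rmax, Rmin. repeat destruct Rle_dec; lra. Qed.

Lemma clamp_id t u : 0 <= u <= t -> clamp t u = u.
Proof. intros Hu. unfold clamp, Rmax, Rmin. repeat destruct Rle_dec; lra. Qed.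

Lemma clamp_lipschitz t u v : Rabs (clamp t u - clamp t v) <= Rabs (u - v).
Proof.
  unfold clamp, Rmax, Rmin, Rabs. repeat (destruct Rle_dec || destruct Rcase_abs); lra.
Qed.

Lemma continuous_clamp t x : continuous (clamp t) x.
Proof.
  apply filterlim_locally. intros eps. exists eps. intros y Hy.
  apply (Rle_lt_trans _ _ _ (clamp_lipschitz t y x)). exact Hy.
Qed.

Lemma continuous_comp_clamp t phi x : 0 <= t -> cont_on_0t t phi ->
  continuous (fun u => phi (clamp t u)) x.
Proof.
  intros Ht Hphi P HP.
  specialize (Hphi (clamp t x) (clamp_between t x Ht) P HP).
  apply (continuous_clamp t x) in Hphi.
  apply (filter_imp _ _ (fun u Hu => Hu (clamp_between t u Ht)) Hphi).
Qed.

Lemma A_0 phi : A phi 0 = 0.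
Proof. unfold A. rewrite RInt_point. reflexivity. Qed.

Lemma exp_2_sub_ln a d : 0 < d -> exp (2 * (a - ln d)) = exp (2 * a) / d ^ 2.
Proof.
  intros Hd. replace (2 * (a - ln d)) with (2 * a + - (ln d + ln d)) by ring.
  rewrite exp_plus, exp_Ropp, exp_plus, exp_ln by exact Hd. field. lra.
Qed.

Section ContinuousPath.

Variable g : R -> R.
Hypothesis g_cont : forall x, continuous g x.

Lemma continuous_exp2 x : continuous (fun u => exp (2 * g u)) x.
Proof. apply continuous_exp_comp, (continuous_scal_r 2 g), g_cont. Qed.

Lemma ex_RInt_exp2 a b : ex_RInt (fun u => exp (2 * g u)) a b.
Proof. apply (@ex_RInt_continuous R_CompleteNormedModule). intros; apply continuous_exp2. Qed.

Lemma is_derive_A x : is_derive (A g) x (exp (2 * g x)).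
Proof.
  apply (is_derive_RInt (fun u => exp (2 * g u)) (A g) 0); [|apply continuous_exp2].
  apply filter_forall. intros b. apply (@RInt_correct R_CompleteNormedModule), ex_RInt_exp2.
Qed.

Lemma continuous_A x : continuous (A g) x.
Proof. apply (@ex_derive_continuous R_AbsRing R_NormedModule). eexists. apply is_derive_A. Qed.

Lemma A_gt0 s : 0 < s -> 0 < A g s.
Proof.
  intros Hs. apply RInt_gt_0; [exact Hs| |].
  - intros; apply exp_pos.
  - intros; apply continuous_exp2.
Qed.

Lemma A_le a b : a <= b -> A g a <= A g b.
Proof.
  intros Hab. unfold A.
  rewrite <- (RInt_Chasles _ 0 a b) by apply ex_RInt_exp2.
  assert (0 <= RInt (fun u => exp (2 * g u)) a b).
  { apply RInt_ge_0; [exact Hab|apply ex_RInt_exp2|]. intros; left; apply exp_pos. }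
  change plus with Rplus. lra.
Qed.

Lemma A_reweight c s : 0 <= s -> (forall u, 0 <= u <= s -> 0 < 1 + c * A g u) ->
  A (fun u => g u - ln (1 + c * A g u)) s = A g s / (1 + c * A g s).
Proof.
  intros Hs HD.
  set (F u := A g u / (1 + c * A g u)).
  replace (A g s / (1 + c * A g s)) with (minus (F s) (F 0))
    by (unfold F, minus, plus, opp; simpl; rewrite A_0; field; specialize (HD s); lra).
  (* F is a primitive of the integrand: F' = A' / (1 + c A)^2 = e^{2 g} / (1 + c A)^2. *)
  apply is_RInt_unique, (@is_RInt_derive R_CompleteNormedModule F);
    rewrite Rmin_left, Rmax_right by lra; intros x Hx; specialize (HD x Hx).
  - pose proof (is_derive_A x) as HA.
    rewrite exp_2_sub_ln by exact HD. unfold F. auto_derive.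
    + assert (ex_derive (A g) x) by (eexists; exact HA). repeat split; auto; lra.
    + replace (Derive (fun u => A g u) x) with (exp (2 * g x))
        by (symmetry; apply is_derive_unique, HA).
      field. lra.
  - apply continuous_exp_comp, (continuous_scal_r 2 (fun u => g u - ln (1 + c * A g u))).
    apply (continuous_minus g); [apply g_cont|].
    apply (continuous_comp (fun u => 1 + c * A g u) ln); [|apply continuous_ln, HD].
    apply (continuous_plus (fun _ => 1)); [apply continuous_const|].
    apply (continuous_scal_r c (A g)), continuous_A.
Qed.

Lemma A_Rev_of_continuous t s : A (Rev t g) s = exp (- (2 * g t)) * (A g t - A g (t - s)).
Proof.
  set (f u := exp (2 * g u)).
  unfold A, Rev.
  rewrite (RInt_ext _ (fun u => scal (- exp (- (2 * g t))) (scal (-1) (f (-1 * u + t))))).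
  2:{ intros x _. unfold f. cbn.
      replace (-1 * x + t) with (t - x) by ring.
      replace (2 * (g (t - x) - g t)) with (- (2 * g t) + 2 * g (t - x)) by ring.
      rewrite exp_plus. ring. }
  rewrite (@RInt_scal R_CompleteNormedModule), (@RInt_comp_lin R_CompleteNormedModule);
    try apply ex_RInt_exp2.
  - fold f. replace (-1 * 0 + t) with t by ring. replace (-1 * s + t) with (t - s) by ring.
    rewrite <- (RInt_Chasles f 0 t (t - s)) by apply ex_RInt_exp2.
    change (scal ?a ?b) with (a * b). change (plus ?a ?b) with (a + b).
    ring.
  - apply (@ex_RInt_comp_lin R_CompleteNormedModule f (-1) t 0 s), ex_RInt_exp2.
Qed.

End ContinuousPath.

Lemma A_ext t psi1 psi2 : (forall u, 0 <= u <= t -> psi1 u = psi2 u) ->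
  forall s, 0 <= s <= t -> A psi1 s = A psi2 s.
Proof.
  intros H s Hs. apply RInt_ext. rewrite Rmin_left, Rmax_right by lra.
  intros u Hu. rewrite H by lra. reflexivity.
Qed.

Lemma bbT_ext t z psi1 psi2 : 0 < t -> (forall u, 0 <= u <= t -> psi1 u = psi2 u) ->
  forall s, 0 <= s <= t -> bbT t z psi1 s = bbT t z psi2 s.
Proof.
  intros Ht H s Hs. unfold bbT.
  rewrite H, (A_ext t psi1 psi2 H s), (A_ext t psi1 psi2 H t) by lra. reflexivity.
Qed.

Lemma calT_ext t psi1 psi2 : 0 < t -> (forall u, 0 <= u <= t -> psi1 u = psi2 u) ->
  forall s, 0 <= s <= t -> calT t psi1 s = calT t psi2 s.
Proof. intros Ht H. unfold calT. rewrite (H t) by lra. apply bbT_ext; assumption. Qed.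

Lemma bbT_0 t phi s : bbT t 0 phi s = phi s.
Proof.
  unfold bbT. rewrite exp_0, Rminus_diag, Rmult_0_r, Rplus_0_r, ln_1. ring.
Qed.

Section PathOn0t.

Variables (t : R) (phi : R -> R).
Hypothesis t_pos : 0 < t.
Hypothesis phi_cont : cont_on_0t t phi.

(* A continuous extension of phi to R, needed because Coquelicot's fundamental theorem
   of calculus asks for two-sided derivatives at the endpoints of [0,t]. *)
Let g u := phi (clamp t u).

Let g_cont x : continuous g x.
Proof. apply continuous_comp_clamp; [lra|exact phi_cont]. Qed.

Let A_g s : 0 <= s <= t -> A phi s = A g s.
Proof. apply A_ext. intros u Hu. unfold g. rewrite clamp_id by exact Hu. reflexivity. Qed.

Lemma A_t_pos : 0 < A phi t.
Proof. rewrite A_g by lra. apply A_gt0; assumption. Qed.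

Lemma A_pos s : 0 < s <= t -> 0 < A phi s.
Proof. intros Hs. rewrite A_g by lra. apply A_gt0; [assumption|lra]. Qed.

Lemma A_between s : 0 <= s <= t -> 0 <= A phi s <= A phi t.
Proof.
  intros Hs. rewrite !A_g by lra. rewrite <- (A_0 g).
  split; apply A_le; auto; lra.
Qed.

Lemma bbT_denom_pos z s : 0 <= s <= t -> 0 < A phi t + A phi s * (exp z - 1).
Proof.
  intros Hs. pose proof A_t_pos. pose proof (A_between s Hs). pose proof (exp_pos z).
  destruct (Rle_dec 1 (exp z)); nra.
Qed.

Lemma bbT_log_arg_pos z s : 0 <= s <= t -> 0 < 1 + A phi s / A phi t * (exp z - 1).
Proof.
  intros Hs. pose proof A_t_pos. pose proof (bbT_denom_pos z s Hs).
  replace (1 + A phi s / A phi t * (exp z - 1))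
    with ((A phi t + A phi s * (exp z - 1)) / A phi t) by (field; lra).
  apply Rdiv_lt_0_compat; assumption.
Qed.

Lemma A_bbT z s : 0 <= s <= t ->
  A (bbT t z phi) s = A phi s / (1 + A phi s / A phi t * (exp z - 1)).
Proof.
  intros Hs. pose proof A_t_pos.
  set (c := (exp z - 1) / A phi t).
  transitivity (A (fun u => g u - ln (1 + c * A g u)) s).
  - apply (A_ext t); [|exact Hs]. intros u Hu. unfold bbT, g.
    rewrite clamp_id, <- A_g by exact Hu. unfold c. do 3 f_equal. field. lra.
  - rewrite (A_reweight g g_cont c s (proj1 Hs)).
    + rewrite <- A_g by exact Hs. unfold c. f_equal. field. lra.
    + intros u Hu. rewrite <- A_g by lra.
      replace (1 + c * A phi u) with (1 + A phi u / A phi t * (exp z - 1))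
        by (unfold c; field; lra).
      apply bbT_log_arg_pos. lra.
Qed.

Lemma bbT_t z : bbT t z phi t = phi t - z.
Proof.
  pose proof A_t_pos. unfold bbT.
  replace (1 + A phi t / A phi t * (exp z - 1)) with (exp z) by (field; lra).
  rewrite ln_exp. reflexivity.
Qed.

Lemma bbT_bbT z w s : 0 <= s <= t -> bbT t w (bbT t z phi) s = bbT t (z + w) phi s.
Proof.
  intros Hs. unfold bbT at 1. rewrite !A_bbT by lra.
  pose proof A_t_pos. pose proof (bbT_log_arg_pos z s Hs). pose proof (bbT_denom_pos z s Hs).
  pose proof (bbT_log_arg_pos (z + w) s Hs). pose proof (exp_pos z).
  unfold bbT. rewrite exp_plus in *.
  set (a := A phi s) in *. set (T := A phi t) in *.
  replace (1 + a / (1 + a / T * (exp z - 1)) / (T / (1 + T / T * (exp z - 1))) * (exp w - 1))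
    with ((1 + a / T * (exp z * exp w - 1)) / (1 + a / T * (exp z - 1)))
    by (field; repeat split; lra).
  rewrite ln_div by lra. ring.
Qed.

Lemma A_Rev s : 0 <= s <= t ->
  A (Rev t phi) s = exp (- (2 * phi t)) * (A phi t - A phi (t - s)).
Proof.
  intros Hs.
  assert (Hphi : forall u, 0 <= u <= t -> phi u = g u)
    by (intros u Hu; unfold g; rewrite clamp_id by exact Hu; reflexivity).
  assert (Hrev : forall u, 0 <= u <= t -> Rev t phi u = Rev t g u)
    by (intros u Hu; unfold Rev; rewrite !Hphi by lra; reflexivity).
  rewrite (A_ext t _ _ Hrev s Hs), (A_Rev_of_continuous g g_cont), Hphi, !A_g by lra. reflexivity.
Qed.

Lemma calT_t : calT t phi t = - phi t.
Proof. unfold calT. rewrite bbT_t. ring. Qed.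

Lemma inv_A_calT s : 0 < s <= t ->
  / A (calT t phi) s = / A phi s + (exp (2 * phi t) - 1) / A phi t.
Proof.
  intros Hs. unfold calT. rewrite A_bbT by lra.
  pose proof A_t_pos. pose proof (A_pos s Hs).
  pose proof (bbT_log_arg_pos (2 * phi t) s ltac:(lra)).
  pose proof (bbT_denom_pos (2 * phi t) s ltac:(lra)).
  field. repeat split; lra.
Qed.

Lemma A_calT_t : A (calT t phi) t = exp (- (2 * phi t)) * A phi t.
Proof.
  unfold calT. rewrite A_bbT, exp_Ropp by lra.
  pose proof A_t_pos. pose proof (exp_pos (2 * phi t)).
  field. split; lra.
Qed.

Lemma Zf_calT s : 0 <= s <= t -> Zf (calT t phi) s = Zf phi s.
Proof.
  intros Hs. unfold Zf, calT. rewrite A_bbT by exact Hs. unfold bbT.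
  pose proof A_t_pos. pose proof (bbT_log_arg_pos (2 * phi t) s Hs) as HD.
  set (D := 1 + A phi s / A phi t * (exp (2 * phi t) - 1)) in *.
  replace (- (phi s - ln D)) with (- phi s + ln D) by ring.
  rewrite exp_plus, exp_ln by exact HD. field. lra.
Qed.

Lemma calT_bbT z s : 0 <= s <= t -> calT t (bbT t z phi) s = bbT t (2 * phi t - z) phi s.
Proof.
  intros Hs. unfold calT. rewrite bbT_t, bbT_bbT by exact Hs. f_equal. ring.
Qed.

Lemma calT_calT s : 0 <= s <= t -> calT t (calT t phi) s = phi s.
Proof.
  intros Hs. unfold calT at 2. rewrite calT_bbT, Rminus_diag by exact Hs. apply bbT_0.
Qed.

Lemma Rev_calT : phi 0 = 0 -> forall s, 0 <= s <= t ->
  Rev t (calT t phi) s = calT t (Rev t phi) s.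
Proof.
  intros Hphi0 s Hs.
  assert (HRt : Rev t phi t = - phi t) by (unfold Rev; rewrite Rminus_diag, Hphi0; ring).
  unfold Rev at 1. rewrite calT_t. unfold calT, bbT. rewrite HRt, !A_Rev by lra.
  rewrite Rminus_diag, A_0.
  pose proof A_t_pos. pose proof (bbT_log_arg_pos (2 * phi t) (t - s) ltac:(lra)).
  pose proof (exp_pos (2 * phi t)).
  replace (2 * - phi t) with (- (2 * phi t)) by ring. rewrite !exp_Ropp.
  set (E := exp (2 * phi t)) in *. set (a := A phi (t - s)) in *. set (T := A phi t) in *.
  replace (1 + / E * (T - a) / (/ E * (T - 0)) * (/ E - 1))
    with ((1 + a / T * (E - 1)) / E) by (field; split; lra).
  rewrite ln_div by lra. unfold E. rewrite ln_exp. unfold Rev. ring.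
Qed.

Lemma calT_bbT_calT_bbT z s : 0 <= s <= t ->
  calT t (bbT t z (calT t (bbT t z phi))) s = phi s.
Proof.
  intros Hs.
  assert (Hinner : forall u, 0 <= u <= t -> bbT t z (calT t (bbT t z phi)) u = calT t phi u).
  { intros u Hu.
    rewrite (bbT_ext t z _ _ t_pos (fun v Hv => calT_bbT z v Hv) u Hu), bbT_bbT by exact Hu.
    unfold calT. f_equal. ring. }
  rewrite (calT_ext t _ _ t_pos Hinner s Hs). apply calT_calT, Hs.
Qed.

End PathOn0t.

Theorem proposition2p2 (t : R) (ht : 0 < t) :
  (* (i) *)
  (forall phi, cont_on_0t t phi -> calT t phi t = - phi t) /\
  (* (ii) *)
  (forall phi, cont_on_0t t phi ->
     (forall s, 0 < s <= t ->
        / A (calT t phi) s = / A phi s + (exp (2 * phi t) - 1) / A phi t) /\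
     A (calT t phi) t = exp (- (2 * phi t)) * A phi t) /\
  (* (iii) *)
  (forall phi, cont_on_0t t phi ->
     forall s, 0 <= s <= t -> Zf (calT t phi) s = Zf phi s) /\
  (* (iv) *)
  (forall (z : R) phi, cont_on_0t t phi ->
     forall s, 0 <= s <= t ->
       calT t (bbT t z (calT t (bbT t z phi))) s = phi s) /\
  (forall phi, cont_on_0t t phi ->
     forall s, 0 <= s <= t -> calT t (calT t phi) s = phi s) /\
  (forall (z : R) phi, cont_on_0t t phi ->
     forall s, 0 <= s <= t -> calT t (bbT t z phi) s = bbT t (2 * phi t - z) phi s) /\
  (* (v) *)
  (forall phi, cont_on_0t t phi -> phi 0 = 0 ->
     forall s, 0 <= s <= t -> Rev t (calT t phi) s = calT t (Rev t phi) s).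
Proof.
  split; [|split; [|split; [|split; [|split; [|split]]]]].
  - intros phi Hphi. exact (calT_t t phi ht Hphi).
  - intros phi Hphi. split.
    + exact (inv_A_calT t phi ht Hphi).
    + exact (A_calT_t t phi ht Hphi).
  - intros phi Hphi. exact (Zf_calT t phi ht Hphi).
  - intros z phi Hphi. exact (calT_bbT_calT_bbT t phi ht Hphi z).
  - intros phi Hphi. exact (calT_calT t phi ht Hphi).
  - intros z phi Hphi. exact (calT_bbT t phi ht Hphi z).
  - intros phi Hphi. exact (Rev_calT t phi ht Hphi).
Qed.
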